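(* Let $\mathbf{L}$ be a Euclidean modal logic. If $\{2\}\times\mathbf{N}^{-}\subseteq\mathtt{S}_{\mathbf{L}}$, then $\mathtt{Th}(\mathtt{Fr}(\mathbf{L}))$ is undecidable.
   Context: A frame is a pair $(W,R)$ with $W$ non-empty and $R\subseteq W\times W$. Modal formulas (propositional variables, $\bot,\neg,\vee,\Box$) have standard Kripke semantics; validity in a frame means truth at all points under all valuations. A (normal) modal logic contains all tautologies and K axioms and is closed under uniform substitution, modus ponens and necessitation; a Euclidean modal logic is one not containing $\bot$ and containing $\Diamond\psi\to\Box\Diamond\psi$ for all $\psi$. $\mathtt{Fr}(\mathbf{L})$ is the class of frames validating $\mathbf{L}$; $\mathtt{Th}(\mathcal{C})$ is the set of first-order sentences (one binary relation symbol $\mathbf{R}$ and equality) valid in all frames of $\mathcal{C}$. $\mathbf{N}^{+}=\{1,2,\dots\}$, $\mathbf{N}^{-}=\{-1,0,1,\dots\}$. For $m\in\mathbf{N}^{+}$, $n\ge0$, the flower $\mathcal{F}_m^n$ has universe $\{0,\dots,m+n\}$ and relation $(\{0\}\times\{1,\dots,m\})\cup\{1,\dots,m+n\}^2$; $\mathcal{F}_m^{-1}$ has universe $\{1,\dots,m\}$ and relation $\{1,\dots,m\}^2$. $\mathtt{S}_{\mathbf{L}}=\{(m,n)\in\mathbf{N}^{+}\times\mathbf{N}^{-}:\ \mathbf{L}\text{ valid in }\mathcal{F}_m^n\}$. *)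

From Stdlib Require Import Arith ZArith List.
Import ListNotations.

Inductive mform : Type :=
| mVar : nat -> mform
| mBot : mform
| mNeg : mform -> mform
| mOr  : mform -> mform -> mform
| mBox : mform -> mform.

Definition mImp (a b : mform) : mform := mOr (mNeg a) b.
Definition mDia (a : mform) : mform := mNeg (mBox (mNeg a)).

Fixpoint msat {W : Type} (R : W -> W -> Prop) (V : nat -> W -> Prop)
  (w : W) (f : mform) : Prop :=
  match f with
  | mVar p => V p w
  | mBot => False
  | mNeg a => ~ msat R V w a
  | mOr a b => msat R V w a \/ msat R V w b
  | mBox a => forall v, R w v -> msat R V v a
  end.

Definition frame_valid {W : Type} (R : W -> W -> Prop) (f : mform) : Prop :=
  forall (V : nat -> W -> Prop) (w : W), msat R V w f.

Definition validates {W : Type} (R : W -> W -> Prop) (L : mform -> Prop) : Prop :=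
  forall f, L f -> frame_valid R f.

Fixpoint msubst (s : nat -> mform) (f : mform) : mform :=
  match f with
  | mVar p => s p
  | mBot => mBot
  | mNeg a => mNeg (msubst s a)
  | mOr a b => mOr (msubst s a) (msubst s b)
  | mBox a => mBox (msubst s a)
  end.

Fixpoint beval (v : mform -> bool) (f : mform) : bool :=
  match f with
  | mVar p => v (mVar p)
  | mBot => false
  | mNeg a => negb (beval v a)
  | mOr a b => orb (beval v a) (beval v b)
  | mBox a => v (mBox a)
  end.

(* instances of propositional tautologies *)
Definition tautology (f : mform) : Prop := forall v, beval v f = true.

Definition normal_modal_logic (L : mform -> Prop) : Prop :=
  (forall f, tautology f -> L f) /\
  (forall a b, L (mImp (mBox (mImp a b)) (mImp (mBox a) (mBox b)))) /\
  (forall s f, L f -> L (msubst s f)) /\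
  (forall a b, L (mImp a b) -> L a -> L b) /\
  (forall a, L a -> L (mBox a)).

Definition euclidean_modal_logic (L : mform -> Prop) : Prop :=
  normal_modal_logic L /\ ~ L mBot /\
  (forall a, L (mImp (mDia a) (mBox (mDia a)))).

(* universe {0..m+n} for n >= 0, {1..m} for n = -1 *)
Definition flower_W (m : nat) (n : Z) : Type :=
  { x : nat | ((n = (-1)%Z) -> 1 <= x) /\ x <= m + Z.to_nat n }.

Definition flower_R (m : nat) (n : Z) (x y : flower_W m n) : Prop :=
  let a := proj1_sig x in let b := proj1_sig y in
  (a = 0 /\ 1 <= b <= m) \/
  (1 <= a <= m + Z.to_nat n /\ 1 <= b <= m + Z.to_nat n).

Definition S_L (L : mform -> Prop) (m : nat) (n : Z) : Prop :=
  1 <= m /\ (-1 <= n)%Z /\ validates (flower_R m n) L.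

Inductive fform : Type :=
| fEq  : nat -> nat -> fform
| fRel : nat -> nat -> fform
| fBot : fform
| fImp : fform -> fform -> fform
| fAll : nat -> fform -> fform.

Definition upd {W : Type} (e : nat -> W) (i : nat) (x : W) : nat -> W :=
  fun j => if Nat.eqb j i then x else e j.

Fixpoint fsat {W : Type} (R : W -> W -> Prop) (e : nat -> W) (f : fform) : Prop :=
  match f with
  | fEq i j => e i = e j
  | fRel i j => R (e i) (e j)
  | fBot => False
  | fImp a b => fsat R e a -> fsat R e b
  | fAll i a => forall x : W, fsat R (upd e i x) a
  end.

Fixpoint free_in (i : nat) (f : fform) : bool :=
  match f with
  | fEq a b => Nat.eqb i a || Nat.eqb i b
  | fRel a b => Nat.eqb i a || Nat.eqb i b
  | fBot => false
  | fImp a b => free_in i a || free_in i b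
  | fAll j a => negb (Nat.eqb i j) && free_in i a
  end.

Definition sentence (f : fform) : Prop := forall i, free_in i f = false.

Definition Th_Fr (L : mform -> Prop) (f : fform) : Prop :=
  sentence f /\
  forall (W : Type) (R : W -> W -> Prop), inhabited W -> validates R L ->
    forall e : nat -> W, fsat R e f.

Inductive prf : Type :=
| pZero : prf
| pSucc : prf
| pProj : nat -> prf
| pComp : prf -> list prf -> prf
| pRec  : prf -> prf -> prf
| pMu   : prf -> prf.

Inductive peval : prf -> list nat -> nat -> Prop :=
| evZero v : peval pZero v 0
| evSucc v : peval pSucc v (S (hd 0 v))
| evProj i v : peval (pProj i) v (nth i v 0)
| evComp f gs v ws y : pevals gs v ws -> peval f ws y -> peval (pComp f gs) v y
| evRec0 f g v y : peval f v y -> peval (pRec f g) (0 :: v) y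
| evRecS f g n v y z :
    peval (pRec f g) (n :: v) y -> peval g (n :: y :: v) z ->
    peval (pRec f g) (S n :: v) z
| evMu f v n :
    peval f (n :: v) 0 ->
    (forall k, k < n -> exists r, peval f (k :: v) (S r)) ->
    peval (pMu f) v n
with pevals : list prf -> list nat -> list nat -> Prop :=
| evsNil v : pevals nil v nil
| evsCons g gs v y ys : peval g v y -> pevals gs v ys -> pevals (g :: gs) v (y :: ys).

Definition cpair (a b : nat) : nat := (a + b) * (a + b + 1) / 2 + b.

Fixpoint fcode (f : fform) : nat :=
  match f with
  | fEq i j => cpair 0 (cpair i j)
  | fRel i j => cpair 1 (cpair i j)
  | fBot => cpair 2 0
  | fImp a b => cpair 3 (cpair (fcode a) (fcode b))
  | fAll i a => cpair 4 (cpair i (fcode a))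
  end.

Definition decidable_sentences (T : fform -> Prop) : Prop :=
  exists p : prf, forall f, sentence f ->
    (T f -> peval p [fcode f] 1) /\ (~ T f -> peval p [fcode f] 0).

(* Two points of a frame are adjacent when they are distinct and seen by a
   common irreflexive point; this is first-order. In the frame of a graph, whose
   vertices form one reflexive cluster and whose edges are irreflexive points
   seeing their two ends, adjacency is exactly the edge relation; and such a
   frame validates L because a refutation uses only finitely many points, which
   map onto some flower F_2^n. Using
   eleven parameter vertices as markers, graphs represent numbers and ternary
   relations, and one sentence states Horn axioms for Cantor pairing, [nth] and
   the evaluation of mu-recursive programs. Every model of these axioms contains
   all true evaluations, and the standard graph contains nothing else. Hence
   "the axioms imply that program x returns 0 on input [x]" belongs to
   Th(Fr(L)) exactly when it is true; as its code is computable from x, a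
   decider for Th(Fr(L)) would give a program returning 0 on its own code iff
   it returns 1 there. *)

From Stdlib Require Import Arith ZArith List Lia Classical ClassicalEpsilon.
From Stdlib Require Import Setoid Morphisms_Prop.
Import ListNotations.
Local Open Scope bool_scope.

(** * Gödel numbering *)

Fixpoint triangle (n : nat) : nat :=
  match n with 0 => 0 | S k => triangle k + S k end.

Lemma triangle_div2 n : triangle n = n * (n + 1) / 2.
Proof.
  induction n as [|n IH]; [reflexivity|].
  cbn [triangle]; rewrite IH.
  replace (S n * (S n + 1)) with (n * (n + 1) + S n * 2) by lia.
  rewrite Nat.div_add by lia; lia.
Qed.

Lemma cpair_triangle a b : cpair a b = triangle (a + b) + b.
Proof. unfold cpair; now rewrite triangle_div2. Qed.

Lemma triangle_le_mono m n : m <= n -> triangle m <= triangle n.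
Proof. induction 1; cbn; lia. Qed.

Lemma cpair_inj a b a' b' : cpair a b = cpair a' b' -> a = a' /\ b = b'.
Proof.
  rewrite !cpair_triangle; intros E.
  destruct (lt_eq_lt_dec (a + b) (a' + b')) as [[Hlt|Heq]|Hgt].
  - pose proof (triangle_le_mono _ _ Hlt); cbn in *; lia.
  - rewrite Heq in E; lia.
  - pose proof (triangle_le_mono _ _ Hgt); cbn in *; lia.
Qed.

Lemma cpair_succ_r a b : cpair a (S b) = S (cpair (S a) b).
Proof. rewrite !cpair_triangle; replace (a + S b) with (S a + b) by lia; lia. Qed.

Lemma cpair_succ_0 a : cpair (S a) 0 = S (cpair 0 a).
Proof. rewrite !cpair_triangle; cbn [triangle Nat.add]; rewrite !Nat.add_0_r; lia. Qed.

Arguments cpair : simpl never.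

Fixpoint lcode (l : list nat) : nat :=
  match l with [] => 0 | n :: l' => S (cpair n (lcode l')) end.

Fixpoint pcode (p : prf) : nat :=
  match p with
  | pZero => cpair 0 0
  | pSucc => cpair 1 0
  | pProj i => cpair 2 i
  | pComp f gs =>
      cpair 3 (cpair (pcode f)
        ((fix pcodes (l : list prf) : nat :=
            match l with [] => 0 | g :: l' => S (cpair (pcode g) (pcodes l')) end) gs))
  | pRec f g => cpair 4 (cpair (pcode f) (pcode g))
  | pMu f => cpair 5 (pcode f)
  end.

Fixpoint pcodes (l : list prf) : nat :=
  match l with [] => 0 | g :: l' => S (cpair (pcode g) (pcodes l')) end.

Lemma pcode_comp f gs : pcode (pComp f gs) = cpair 3 (cpair (pcode f) (pcodes gs)).
Proof. cbn; do 3 f_equal; induction gs; cbn; congruence. Qed.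

Lemma lcode_nil_inv l : 0 = lcode l -> l = [].
Proof. now destruct l. Qed.

Lemma lcode_cons_inv a b l :
  S (cpair a b) = lcode l -> exists l', l = a :: l' /\ b = lcode l'.
Proof.
  destruct l as [|n l']; cbn; intros E; [discriminate|].
  injection E as E; apply cpair_inj in E as [-> ->]; eauto.
Qed.

Lemma pcodes_nil_inv gs : 0 = pcodes gs -> gs = [].
Proof. now destruct gs. Qed.

Lemma pcodes_cons_inv a b gs : S (cpair a b) = pcodes gs ->
  exists g gs', gs = g :: gs' /\ a = pcode g /\ b = pcodes gs'.
Proof.
  destruct gs as [|g gs']; cbn; intros E; [discriminate|].
  injection E as E; apply cpair_inj in E as [-> ->]; eauto.
Qed.

Lemma pcode_inv t x F : cpair t x = pcode F ->
  match t with
  | 0 => F = pZero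
  | 1 => F = pSucc
  | 2 => F = pProj x
  | 3 => exists f gs, F = pComp f gs /\ x = cpair (pcode f) (pcodes gs)
  | 4 => exists f g, F = pRec f g /\ x = cpair (pcode f) (pcode g)
  | 5 => exists f, F = pMu f /\ x = pcode f
  | _ => False
  end.
Proof.
  destruct F; rewrite ?pcode_comp; cbn [pcode];
    intros E; apply cpair_inj in E as [-> ->]; eauto.
Qed.

Fixpoint peval_functional p v y (H : peval p v y) {struct H} :
  forall y', peval p v y' -> y = y'
with pevals_functional gs v ws (H : pevals gs v ws) {struct H} :
  forall ws', pevals gs v ws' -> ws = ws'.
Proof.
  - destruct H as [| | |f gs v ws y Hgs Hf|f g v y Hf|f g n v y z Hrec Hg|f v n Hz Hmin];
      intros y' H'; inversion H'; clear H'; subst; auto.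
    + match goal with H : pevals _ _ _ |- _ => apply (pevals_functional _ _ _ Hgs) in H end.
      subst; eauto.
    + eauto.
    + match goal with H : peval (pRec _ _) _ _ |- _ => apply (peval_functional _ _ _ Hrec) in H end.
      subst; eauto.
    + destruct (lt_eq_lt_dec n y') as [[Hlt|]|Hgt]; auto; exfalso.
      * match goal with H : forall k, k < y' -> _ |- _ => destruct (H n Hlt) as [r Hr] end.
        apply (peval_functional _ _ _ Hz) in Hr; discriminate.
      * destruct (Hmin y' Hgt) as [r Hr].
        match goal with H : peval f (y' :: v) 0 |- _ =>
          apply (peval_functional _ _ _ Hr) in H; discriminate end.
  - destruct H as [|g gs v y ys Hg Hgs]; intros ws' H'; inversion H'; clear H'; subst; auto.
    f_equal; eauto.
Qed.

Fixpoint const_prog (i : nat) : prf :=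
  match i with 0 => pZero | S j => pComp pSucc [const_prog j] end.

Lemma const_prog_spec i v : peval (const_prog i) v i.
Proof.
  induction i as [|i IH]; cbn; [constructor|].
  econstructor; [econstructor; [exact IH|constructor]|apply (evSucc [i])].
Qed.

Arguments const_prog : simpl never.

Definition add_prog : prf := pRec (pProj 0) (pComp pSucc [pProj 1]).

Lemma add_prog_spec a b : peval add_prog [a; b] (a + b).
Proof.
  induction a as [|a IH]; cbn.
  - apply evRec0, (evProj 0 [b]).
  - eapply evRecS; [exact IH|].
    econstructor; [econstructor; [apply (evProj 1 [a; a + b; b])|constructor]|constructor].
Qed.

Definition triangle_prog : prf :=
  pRec pZero (pComp add_prog [pProj 1; pComp pSucc [pProj 0]]).

Lemma triangle_prog_spec n : peval triangle_prog [n] (triangle n).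
Proof.
  induction n as [|n IH]; cbn.
  - apply evRec0; constructor.
  - eapply evRecS; [exact IH|].
    econstructor; [|apply add_prog_spec].
    econstructor; [apply (evProj 1 [n; triangle n])|].
    econstructor; [|constructor].
    econstructor; [econstructor; [apply (evProj 0 [n; triangle n])|constructor]|constructor].
Qed.

Definition cpair_prog : prf := pComp add_prog [pComp triangle_prog [add_prog]; pProj 1].

Lemma cpair_prog_spec a b : peval cpair_prog [a; b] (cpair a b).
Proof.
  rewrite cpair_triangle.
  econstructor; [|apply add_prog_spec].
  econstructor.
  - econstructor; [econstructor; [apply add_prog_spec|constructor]|apply triangle_prog_spec].
  - econstructor; [apply (evProj 1 [a; b])|constructor].
Qed.

Definition pair_prog (P Q : prf) : prf := pComp cpair_prog [P; Q].

Lemma pair_prog_spec P Q v a b :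
  peval P v a -> peval Q v b -> peval (pair_prog P Q) v (cpair a b).
Proof.
  intros HP HQ.
  econstructor; [|apply cpair_prog_spec].
  econstructor; [exact HP|econstructor; [exact HQ|constructor]].
Qed.

Fixpoint fcode_prog (f : fform) : prf :=
  match f with
  | fEq i j => pair_prog (const_prog 0) (pair_prog (const_prog i) (const_prog j))
  | fRel i j => pair_prog (const_prog 1) (pair_prog (const_prog i) (const_prog j))
  | fBot => pair_prog (const_prog 2) (const_prog 0)
  | fImp a b => pair_prog (const_prog 3) (pair_prog (fcode_prog a) (fcode_prog b))
  | fAll i a => pair_prog (const_prog 4) (pair_prog (const_prog i) (fcode_prog a))
  end.

Lemma fcode_prog_spec f v : peval (fcode_prog f) v (fcode f).
Proof. induction f; cbn; repeat apply pair_prog_spec; auto using const_prog_spec. Qed.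

Inductive fctx : Type :=
| CHole : fctx
| CImpL : fctx -> fform -> fctx
| CImpR : fform -> fctx -> fctx
| CAll : nat -> fctx -> fctx.

Fixpoint fill (c : fctx) (p : fform) : fform :=
  match c with
  | CHole => p
  | CImpL c b => fImp (fill c p) b
  | CImpR a c => fImp a (fill c p)
  | CAll i c => fAll i (fill c p)
  end.

Fixpoint fill_prog (c : fctx) : prf :=
  match c with
  | CHole => pProj 0
  | CImpL c b => pair_prog (const_prog 3) (pair_prog (fill_prog c) (fcode_prog b))
  | CImpR a c => pair_prog (const_prog 3) (pair_prog (fcode_prog a) (fill_prog c))
  | CAll i c => pair_prog (const_prog 4) (pair_prog (const_prog i) (fill_prog c))
  end.

Lemma fill_prog_spec c p v : peval (fill_prog c) (fcode p :: v) (fcode (fill c p)).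
Proof.
  induction c; cbn; repeat apply pair_prog_spec;
    auto using const_prog_spec, fcode_prog_spec.
  apply (evProj 0 (fcode p :: v)).
Qed.

Definition fNot (a : fform) : fform := fImp a fBot.
Definition fAnd (a b : fform) : fform := fNot (fImp a (fNot b)).
Definition fEx (i : nat) (a : fform) : fform := fNot (fAll i (fNot a)).
Definition fConj (l : list fform) : fform := fold_right fAnd (fNot fBot) l.
Definition fAlls (vs : list nat) (a : fform) : fform := fold_right fAll a vs.
Definition fImps (l : list fform) (c : fform) : fform := fold_right fImp c l.

Ltac upd_simpl :=
  unfold upd in *;
  repeat match goal with
  | |- context [Nat.eqb ?a ?b] => destruct (Nat.eqb_spec a b); try (exfalso; lia)
  | H : context [Nat.eqb ?a ?b] |- _ => destruct (Nat.eqb_spec a b); try (exfalso; lia)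
  end.

Section FirstOrderSemantics.
Context {W : Type} (R : W -> W -> Prop).

Lemma upd_same (e : nat -> W) i x : upd e i x i = x.
Proof. unfold upd; now rewrite Nat.eqb_refl. Qed.

Lemma upd_other (e : nat -> W) i x j : j <> i -> upd e i x j = e j.
Proof. intros H; unfold upd; now destruct (Nat.eqb_spec j i). Qed.

Lemma fsat_ext f e e' : (forall j, e j = e' j) -> fsat R e f <-> fsat R e' f.
Proof.
  revert e e'; induction f as [i j|i j| |a IHa b IHb|i a IH]; intros e e' E; cbn.
  - now rewrite !E.
  - now rewrite !E.
  - reflexivity.
  - now rewrite (IHa e e'), (IHb e e').
  - split; intros H x; eapply IH; try apply H;
      intros j; unfold upd; destruct (Nat.eqb j i); auto.
Qed.

Lemma fsat_and e a b : fsat R e (fAnd a b) <-> fsat R e a /\ fsat R e b.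
Proof. cbn; tauto. Qed.

Lemma fsat_ex e i a : fsat R e (fEx i a) <-> exists x, fsat R (upd e i x) a.
Proof.
  cbn; split.
  - intros H; apply NNPP; intros H'; apply H; intros x Hx; apply H'; eauto.
  - intros [x Hx] H; exact (H x Hx).
Qed.

Lemma fsat_conj e l : fsat R e (fConj l) <-> Forall (fsat R e) l.
Proof.
  induction l as [|a l IH]; cbn.
  - split; auto.
  - rewrite Forall_cons_iff, <- IH; cbn; tauto.
Qed.

Lemma fsat_imps e l c : fsat R e (fImps l c) <-> (Forall (fsat R e) l -> fsat R e c).
Proof.
  induction l as [|a l IH]; cbn.
  - split; auto.
  - rewrite Forall_cons_iff, IH; tauto.
Qed.

Lemma fsat_alls vs a e : fsat R e (fAlls vs a) <->
  forall e', (forall j, ~ In j vs -> e' j = e j) -> fsat R e' a.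
Proof.
  revert e; induction vs as [|v vs IH]; intros e; cbn.
  - split.
    + intros H e' He; apply (fsat_ext a e); auto; intros j; symmetry; auto.
    + intros H; apply H; auto.
  - split.
    + intros H e' He; specialize (H (e' v)); rewrite IH in H; apply H.
      intros j Hj; unfold upd; destruct (Nat.eqb_spec j v); subst; auto.
      apply He; intros [<-|]; tauto.
    + intros H x; rewrite IH; intros e' He; apply H; intros j Hj.
      rewrite He by tauto; unfold upd; destruct (Nat.eqb_spec j v); auto.
      exfalso; auto.
Qed.

End FirstOrderSemantics.

(* Variables 0-10 hold the parameters, i.e. the markers: 0 of numbers, 1 of
   zero, 2-4 of the three ports of a gadget, 5+k of relation k. Variables
   11-15 are bound inside [fAdj] and [fRel3]; the axioms, the rules and the
   goal use variables from 16 on. *)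
Definition fAdj (x y : nat) : fform :=
  fAnd (fNot (fEq x y))
       (fEx 11 (fAnd (fNot (fRel 11 11)) (fAnd (fRel 11 x) (fRel 11 y)))).
Definition fNum (x : nat) : fform := fAdj x 0.
Definition fZero (x : nat) : fform := fAdj x 1.
Definition fRel3 (k x y z : nat) : fform :=
  fEx 12 (fEx 13 (fEx 14 (fEx 15 (fConj
   [fAdj 12 (5 + k); fAdj 12 13; fAdj 13 2; fAdj 13 x; fAdj 12 14; fAdj 14 3; fAdj 14 y;
    fAdj 12 15; fAdj 15 4; fAdj 15 z])))).
Definition fSucc (x y : nat) : fform := fRel3 1 x y y.

Section Definability.
Context {W : Type} (R : W -> W -> Prop).

Definition adjacent (x y : W) : Prop := x <> y /\ exists r, ~ R r r /\ R r x /\ R r y.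

Definition is_num (m : nat -> W) (x : W) : Prop := adjacent x (m 0).
Definition is_zero (m : nat -> W) (x : W) : Prop := adjacent x (m 1).
Definition rel_holds (m : nat -> W) (k : nat) (x y z : W) : Prop :=
  exists g p1 p2 p3, adjacent g (m (5 + k)) /\
    adjacent g p1 /\ adjacent p1 (m 2) /\ adjacent p1 x /\
    adjacent g p2 /\ adjacent p2 (m 3) /\ adjacent p2 y /\
    adjacent g p3 /\ adjacent p3 (m 4) /\ adjacent p3 z.

Lemma fsat_fAdj e x y : x <> 11 -> y <> 11 ->
  fsat R e (fAdj x y) <-> adjacent (e x) (e y).
Proof.
  intros Hx Hy; unfold fAdj, adjacent.
  rewrite fsat_and, fsat_ex; cbn; upd_simpl; split.
  - intros [Hne [r Hr]]; split; auto; exists r.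
    destruct (classic (R r r)), (classic (R r (e x))), (classic (R r (e y))); tauto.
  - intros [Hne [r Hr]]; split; auto; exists r; tauto.
Qed.

Lemma fsat_fRel3 e k x y z : k <= 5 ->
  ~ (11 <= x <= 15) -> ~ (11 <= y <= 15) -> ~ (11 <= z <= 15) ->
  fsat R e (fRel3 k x y z) <-> rel_holds e k (e x) (e y) (e z).
Proof.
  intros Hk Hx Hy Hz; unfold fRel3, rel_holds; split.
  - intros H; apply fsat_ex in H as [g H]; apply fsat_ex in H as [p1 H].
    apply fsat_ex in H as [p2 H]; apply fsat_ex in H as [p3 H].
    rewrite fsat_conj, !Forall_cons_iff, Forall_nil_iff, !fsat_fAdj in H by lia.
    exists g, p1, p2, p3; upd_simpl; tauto.
  - intros (g & p1 & p2 & p3 & H).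
    apply fsat_ex; exists g; apply fsat_ex; exists p1.
    apply fsat_ex; exists p2; apply fsat_ex; exists p3.
    rewrite fsat_conj, !Forall_cons_iff, Forall_nil_iff, !fsat_fAdj by lia.
    upd_simpl; tauto.
Qed.

End Definability.

(** * Horn axioms for evaluation *)

Inductive atom : Type := AZero (i : nat) | ARel (k i j l : nat).

Record rule : Type := mkRule { rule_arity : nat; rule_prems : list atom; rule_concl : atom }.

Definition atom_wf (n : nat) (a : atom) : bool :=
  match a with
  | AZero i => i <? n
  | ARel k i j l => (k <=? 5) && (i <? n) && (j <? n) && (l <? n)
  end.

Definition rule_wf (r : rule) : bool :=
  forallb (atom_wf (rule_arity r)) (rule_concl r :: rule_prems r).

Definition atomF (a : atom) : fform :=
  match a with
  | AZero i => fZero (20 + i)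
  | ARel k i j l => fRel3 k (20 + i) (20 + j) (20 + l)
  end.

Definition ruleF (r : rule) : fform :=
  fAlls (seq 20 (rule_arity r))
    (fImps (map fNum (seq 20 (rule_arity r)))
       (fImps (map atomF (rule_prems r)) (atomF (rule_concl r)))).

Definition same_params {W} (m m' : nat -> W) : Prop := forall j, j < 11 -> m j = m' j.

Definition bind_rule_vars {W} (e : nat -> W) (n : nat) (rho : nat -> W) : nat -> W :=
  fun j => if (20 <=? j) && (j <? 20 + n) then rho (j - 20) else e j.

Lemma bind_rule_vars_params {W} (e : nat -> W) n rho : same_params (bind_rule_vars e n rho) e.
Proof. intros j Hj; unfold bind_rule_vars; destruct (Nat.leb_spec 20 j); [lia|auto]. Qed.

Lemma bind_rule_vars_at {W} (e : nat -> W) n rho i :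
  i < n -> bind_rule_vars e n rho (20 + i) = rho i.
Proof.
  intros Hi; unfold bind_rule_vars.
  destruct (Nat.leb_spec 20 (20 + i)), (Nat.ltb_spec (20 + i) (20 + n)); try lia.
  cbn; f_equal; lia.
Qed.

Section RuleSemantics.
Context {W : Type} (R : W -> W -> Prop).

Definition atom_holds (m rho : nat -> W) (a : atom) : Prop :=
  match a with
  | AZero i => is_zero R m (rho i)
  | ARel k i j l => rel_holds R m k (rho i) (rho j) (rho l)
  end.

Definition rule_holds (m : nat -> W) (r : rule) : Prop :=
  forall rho : nat -> W, (forall i, i < rule_arity r -> is_num R m (rho i)) ->
    Forall (atom_holds m rho) (rule_prems r) -> atom_holds m rho (rule_concl r).

Lemma is_num_params m m' x : same_params m m' -> is_num R m x <-> is_num R m' x.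
Proof. intros E; unfold is_num; now rewrite (E 0) by lia. Qed.

Lemma is_zero_params m m' x : same_params m m' -> is_zero R m x <-> is_zero R m' x.
Proof. intros E; unfold is_zero; now rewrite (E 1) by lia. Qed.

Lemma rel_holds_params m m' k x y z : same_params m m' -> k <= 5 ->
  rel_holds R m k x y z <-> rel_holds R m' k x y z.
Proof.
  intros E Hk; unfold rel_holds; now rewrite (E (5 + k)), (E 2), (E 3), (E 4) by lia.
Qed.

Lemma atom_holds_ext n a m m' rho rho' : atom_wf n a = true ->
  same_params m m' -> (forall i, i < n -> rho i = rho' i) ->
  atom_holds m rho a <-> atom_holds m' rho' a.
Proof.
  intros Hwf Em Erho; destruct a as [i|k i j l]; cbn [atom_wf atom_holds] in *.
  - apply Nat.ltb_lt in Hwf; rewrite Erho by auto; now apply is_zero_params.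
  - rewrite !Bool.andb_true_iff, Nat.leb_le, !Nat.ltb_lt in Hwf.
    rewrite !Erho by tauto; apply rel_holds_params; tauto.
Qed.

Lemma fsat_atomF n e a : atom_wf n a = true ->
  fsat R e (atomF a) <-> atom_holds e (fun i => e (20 + i)) a.
Proof.
  intros Hwf; destruct a as [i|k i j l]; cbn [atomF atom_holds].
  - unfold fZero; rewrite fsat_fAdj by lia; reflexivity.
  - cbn [atom_wf] in Hwf; rewrite !Bool.andb_true_iff, Nat.leb_le in Hwf.
    rewrite fsat_fRel3 by lia; reflexivity.
Qed.

Lemma fsat_alls_rule_vars n e f :
  fsat R e (fAlls (seq 20 n) f) <-> forall rho, fsat R (bind_rule_vars e n rho) f.
Proof.
  rewrite fsat_alls; split.
  - intros H rho; apply H; intros j Hj; rewrite in_seq in Hj.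
    unfold bind_rule_vars; destruct (Nat.leb_spec 20 j), (Nat.ltb_spec j (20 + n));
      cbn; auto; lia.
  - intros H e' He; apply (fsat_ext R f (bind_rule_vars e n (fun i => e' (20 + i)))).
    + intros j; unfold bind_rule_vars.
      destruct (Nat.leb_spec 20 j), (Nat.ltb_spec j (20 + n)); cbn.
      * f_equal; lia.
      * symmetry; apply He; rewrite in_seq; lia.
      * symmetry; apply He; rewrite in_seq; lia.
      * symmetry; apply He; rewrite in_seq; lia.
    + apply H.
Qed.

Lemma fsat_ruleF r e : rule_wf r = true -> fsat R e (ruleF r) <-> rule_holds e r.
Proof.
  intros Hwf; unfold rule_wf in Hwf; rewrite forallb_forall in Hwf.
  unfold ruleF, rule_holds; rewrite fsat_alls_rule_vars.
  set (n := rule_arity r) in *.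
  assert (Hatom : forall rho a, In a (rule_concl r :: rule_prems r) ->
            fsat R (bind_rule_vars e n rho) (atomF a) <-> atom_holds e rho a).
  { intros rho a Ha; rewrite fsat_atomF with (n := n) by auto.
    apply atom_holds_ext with (n := n); auto using bind_rule_vars_params, bind_rule_vars_at. }
  assert (Hnum : forall rho,
            Forall (fsat R (bind_rule_vars e n rho)) (map fNum (seq 20 n)) <->
            forall i, i < n -> is_num R e (rho i)).
  { intros rho; rewrite Forall_map, Forall_forall; setoid_rewrite in_seq; split.
    - intros H i Hi; specialize (H (20 + i) ltac:(lia)); unfold fNum in H.
      rewrite fsat_fAdj, bind_rule_vars_at in H by lia.
      unfold is_num; now rewrite <- (bind_rule_vars_params e n rho 0) by lia.
    - intros H j Hj; unfold fNum; rewrite fsat_fAdj by lia.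
      replace j with (20 + (j - 20)) by lia; rewrite bind_rule_vars_at by lia.
      rewrite (bind_rule_vars_params e n rho 0) by lia; apply H; lia. }
  assert (Hprems : forall rho,
            Forall (fun a => fsat R (bind_rule_vars e n rho) (atomF a)) (rule_prems r) <->
            Forall (atom_holds e rho) (rule_prems r)).
  { intros rho; rewrite !Forall_forall.
    split; intros H a Ha; specialize (H a Ha); rewrite Hatom in *; auto; right; auto. }
  split; intros H rho; specialize (H rho); revert H;
    rewrite !fsat_imps, Hnum, Forall_map, Hprems, Hatom by (left; auto); auto.
Qed.

End RuleSemantics.

Definition aPair i j l := ARel 0 i j l.
Definition aSucc i j := ARel 1 i j j.
Definition aNth i j l := ARel 2 i j l.
Definition aEv i j l := ARel 3 i j l.
Definition aEvs i j l := ARel 4 i j l.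
Definition aMu i j l := ARel 5 i j l.

(* The six relations are the graph of [cpair], the successor function,
   [nth] on coded lists, [peval] and [pevals] on codes, and "f is positive
   on (k :: v) for every k < n" for [aMu f v n]. The rules are the clauses of
   their inductive definitions, with codes unfolded into pairs and successors:
   e.g. [rule_pair_succ_r] is cpair a (S b) = S (cpair (S a) b). *)
Definition rule_pair_zero := mkRule 1 [AZero 0] (aPair 0 0 0).
Definition rule_pair_succ_r :=
  mkRule 6 [aPair 1 2 4; aSucc 0 1; aSucc 2 3; aSucc 4 5] (aPair 0 3 5).
Definition rule_pair_succ_0 :=
  mkRule 5 [AZero 0; aPair 0 1 2; aSucc 1 3; aSucc 2 4] (aPair 3 0 4).
Definition rule_nth_nil := mkRule 2 [AZero 1] (aNth 0 1 1).
Definition rule_nth_cons_0 := mkRule 5 [AZero 0; aPair 1 2 3; aSucc 3 4] (aNth 0 4 1).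
Definition rule_nth_cons_succ :=
  mkRule 7 [aSucc 0 1; aNth 0 2 3; aPair 4 2 5; aSucc 5 6] (aNth 1 6 3).
Definition rule_ev_zero := mkRule 3 [AZero 2; aPair 2 2 0] (aEv 0 1 2).
Definition rule_ev_succ :=
  mkRule 6 [AZero 3; aSucc 3 4; aPair 4 3 0; aNth 3 1 5; aSucc 5 2] (aEv 0 1 2).
Definition rule_ev_proj :=
  mkRule 7 [AZero 3; aSucc 3 4; aSucc 4 5; aPair 5 6 0; aNth 6 1 2] (aEv 0 1 2).
Definition rule_ev_comp :=
  mkRule 11 [AZero 3; aSucc 3 4; aSucc 4 5; aSucc 5 6; aPair 6 7 0; aPair 8 9 7;
             aEvs 9 1 10; aEv 8 10 2] (aEv 0 1 2).
Definition rule_ev_rec_0 :=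
  mkRule 13 [AZero 3; aSucc 3 4; aSucc 4 5; aSucc 5 6; aSucc 6 7; aPair 7 8 0;
             aPair 9 10 8; aPair 3 11 12; aSucc 12 1; aEv 9 11 2] (aEv 0 1 2).
Definition rule_ev_rec_succ :=
  mkRule 22 [AZero 3; aSucc 3 4; aSucc 4 5; aSucc 5 6; aSucc 6 7; aPair 7 8 0;
             aPair 9 10 8; aSucc 11 12; aPair 12 13 21; aSucc 21 1; aPair 11 13 14;
             aSucc 14 15; aEv 0 15 16; aPair 16 13 17; aSucc 17 18; aPair 11 18 19;
             aSucc 19 20; aEv 10 20 2] (aEv 0 1 2).
Definition rule_ev_mu :=
  mkRule 12 [AZero 3; aSucc 3 4; aSucc 4 5; aSucc 5 6; aSucc 6 7; aSucc 7 8;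
             aPair 8 9 0; aPair 2 1 10; aSucc 10 11; aEv 9 11 3; aMu 9 1 2] (aEv 0 1 2).
Definition rule_evs_nil := mkRule 2 [AZero 0] (aEvs 0 1 0).
Definition rule_evs_cons :=
  mkRule 9 [aEvs 0 1 2; aEv 3 1 4; aPair 3 0 5; aSucc 5 6; aPair 4 2 7; aSucc 7 8]
    (aEvs 6 1 8).
Definition rule_mu_0 := mkRule 3 [AZero 2] (aMu 0 1 2).
Definition rule_mu_succ :=
  mkRule 8 [aMu 0 1 2; aSucc 2 3; aPair 2 1 4; aSucc 4 5; aEv 0 5 6; aSucc 7 6]
    (aMu 0 1 3).

Definition pair_rules := [rule_pair_zero; rule_pair_succ_r; rule_pair_succ_0].
Definition nth_rules := [rule_nth_nil; rule_nth_cons_0; rule_nth_cons_succ].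
Definition ev_rules :=
  [rule_ev_zero; rule_ev_succ; rule_ev_proj; rule_ev_comp;
   rule_ev_rec_0; rule_ev_rec_succ; rule_ev_mu].
Definition evs_rules := [rule_evs_nil; rule_evs_cons].
Definition mu_rules := [rule_mu_0; rule_mu_succ].

Definition rules : list rule := pair_rules ++ nth_rules ++ ev_rules ++ evs_rules ++ mu_rules.

Lemma rules_wf r : In r rules -> rule_wf r = true.
Proof. revert r; apply forallb_forall; vm_compute; reflexivity. Qed.

Definition fExistsZero : fform := fEx 16 (fAnd (fNum 16) (fZero 16)).
Definition fSuccTotal : fform :=
  fAll 16 (fImp (fNum 16) (fEx 17 (fAnd (fNum 17) (fSucc 16 17)))).
Definition fAxioms : fform := fConj (fExistsZero :: fSuccTotal :: map ruleF rules).

(* [fAll 16 (fImp (fEq 16 17) _)] moves the predecessor into variable 16. *)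
Fixpoint fNumeral (x : nat) : fform :=
  match x with
  | 0 => fAnd (fNum 16) (fZero 16)
  | S y => fEx 17 (fAnd (fAnd (fNum 17) (fSucc 17 16))
                        (fAll 16 (fImp (fEq 16 17) (fNumeral y))))
  end.

(* Program 16 returns 0 on input [16]: 18 is zero, 19 = cpair 16 18 and
   20 = lcode [16]. *)
Definition fSelfZero : fform :=
  fEx 18 (fEx 19 (fEx 20 (fConj
    [fNum 16; fNum 18; fZero 18; fNum 19; fRel3 0 16 18 19; fNum 20;
     fSucc 19 20; fRel3 3 16 20 18]))).

Definition diag_sentence (x : nat) : fform :=
  fAlls (seq 0 11) (fImp fAxioms (fEx 16 (fAnd (fNumeral x) fSelfZero))).

Section AxiomSemantics.
Context {W : Type} (R : W -> W -> Prop).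

Definition axioms_hold (m : nat -> W) : Prop :=
  (exists z, is_num R m z /\ is_zero R m z) /\
  (forall x, is_num R m x -> exists y, is_num R m y /\ rel_holds R m 1 x y y) /\
  (forall r, In r rules -> rule_holds R m r).

Fixpoint numeral (m : nat -> W) (x : nat) (a : W) : Prop :=
  match x with
  | 0 => is_num R m a /\ is_zero R m a
  | S y => exists b, (is_num R m b /\ rel_holds R m 1 b a a) /\ numeral m y b
  end.

Definition self_zero (m : nat -> W) (a : W) : Prop :=
  exists z p v, is_num R m a /\ is_num R m z /\ is_zero R m z /\ is_num R m p /\
    rel_holds R m 0 a z p /\ is_num R m v /\ rel_holds R m 1 p v v /\
    rel_holds R m 3 a v z.

Definition goal_holds (m : nat -> W) (x : nat) : Prop :=
  exists a, numeral m x a /\ self_zero m a.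

Lemma same_params_upd (e : nat -> W) j x : 11 <= j -> same_params (upd e j x) e.
Proof. intros Hj i Hi; apply upd_other; lia. Qed.

Lemma same_params_trans (m1 m2 m3 : nat -> W) :
  same_params m1 m2 -> same_params m2 m3 -> same_params m1 m3.
Proof. intros E1 E2 j Hj; rewrite E1; auto. Qed.

Lemma numeral_params m m' x a : same_params m m' -> numeral m x a <-> numeral m' x a.
Proof.
  intros E; revert a; induction x as [|x IH]; intros a; cbn.
  - now rewrite (is_num_params R m m'), (is_zero_params R m m').
  - setoid_rewrite IH; setoid_rewrite (is_num_params R m m' _ E).
    setoid_rewrite (rel_holds_params R m m' _ _ _ _ E); [reflexivity|lia].
Qed.

Lemma self_zero_params m m' a : same_params m m' -> self_zero m a <-> self_zero m' a.
Proof.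
  intros E; unfold self_zero, is_num, is_zero, rel_holds; cbn.
  now rewrite (E 0), (E 1), (E 2), (E 3), (E 4), (E 5), (E 6), (E 8) by lia.
Qed.

Lemma fsat_fExistsZero e :
  fsat R e fExistsZero <-> exists z, is_num R e z /\ is_zero R e z.
Proof.
  unfold fExistsZero; rewrite fsat_ex.
  split; intros [z Hz]; exists z; revert Hz;
    rewrite fsat_and; unfold fNum, fZero; rewrite !fsat_fAdj by lia; auto.
Qed.

Lemma fsat_fSuccTotal e : fsat R e fSuccTotal <->
  forall x, is_num R e x -> exists y, is_num R e y /\ rel_holds R e 1 x y y.
Proof.
  assert (E : forall x y, same_params (upd (upd e 16 x) 17 y) e).
  { intros x y; eapply same_params_trans; apply same_params_upd; lia. }
  unfold fSuccTotal, fNum, fSucc; cbn [fsat].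
  apply all_iff_morphism; intros x.
  rewrite fsat_fAdj, upd_same, upd_other by lia.
  apply imp_iff_compat_l; rewrite fsat_ex.
  apply ex_iff_morphism; intros y.
  rewrite fsat_and, fsat_fAdj, fsat_fRel3 by lia; cbn [upd Nat.eqb].
  now rewrite (rel_holds_params R _ e) by (auto; lia).
Qed.

Lemma fsat_fAxioms e : fsat R e fAxioms <-> axioms_hold e.
Proof.
  unfold fAxioms, axioms_hold.
  rewrite fsat_conj, !Forall_cons_iff, Forall_map, Forall_forall.
  rewrite fsat_fExistsZero, fsat_fSuccTotal.
  enough ((forall r, In r rules -> fsat R e (ruleF r)) <->
          (forall r, In r rules -> rule_holds R e r)) by tauto.
  split; intros H r Hr; specialize (H r Hr); revert H;
    rewrite fsat_ruleF by auto using rules_wf; auto.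
Qed.

Lemma fsat_fNumeral x e : fsat R e (fNumeral x) <-> numeral e x (e 16).
Proof.
  revert e; induction x as [|x IH]; intros e.
  - cbn [fNumeral numeral]; unfold fNum, fZero.
    now rewrite fsat_and, !fsat_fAdj by lia.
  - cbn [fNumeral numeral]; rewrite fsat_ex.
    apply ex_iff_morphism; intros b.
    unfold fNum, fSucc; rewrite !fsat_and, fsat_fAdj, fsat_fRel3 by lia.
    cbn [fsat upd Nat.eqb].
    rewrite (rel_holds_params R _ e) by (try apply same_params_upd; lia).
    enough ((forall c, c = b -> fsat R (upd (upd e 17 b) 16 c) (fNumeral x)) <->
            numeral e x b) as -> by reflexivity.
    setoid_rewrite IH; cbn [upd Nat.eqb].
    assert (E : same_params (upd (upd e 17 b) 16 b) e).
    { eapply same_params_trans; apply same_params_upd; lia. }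
    split.
    + intros H; apply (numeral_params _ _ _ _ E), H; reflexivity.
    + intros H c ->; apply (numeral_params _ _ _ _ E), H.
Qed.

Lemma fsat_fSelfZero e : fsat R e fSelfZero <-> self_zero e (e 16).
Proof.
  unfold fSelfZero, self_zero; split.
  - intros H; apply fsat_ex in H as [z H]; apply fsat_ex in H as [p H].
    apply fsat_ex in H as [v H]; exists z, p, v.
    unfold fNum, fZero, fSucc in H.
    rewrite fsat_conj, !Forall_cons_iff, !fsat_fAdj, !fsat_fRel3 in H by lia.
    unfold is_num, is_zero, rel_holds in *; cbn [upd Nat.eqb Nat.add] in H; tauto.
  - intros (z & p & v & H).
    apply fsat_ex; exists z; apply fsat_ex; exists p; apply fsat_ex; exists v.
    unfold fNum, fZero, fSucc.
    rewrite fsat_conj, !Forall_cons_iff, Forall_nil_iff, !fsat_fAdj, !fsat_fRel3 by lia.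
    unfold is_num, is_zero, rel_holds in *; cbn [upd Nat.eqb Nat.add]; tauto.
Qed.

Lemma fsat_diag_sentence x e : fsat R e (diag_sentence x) <->
  forall m, (forall j, 11 <= j -> m j = e j) -> axioms_hold m -> goal_holds m x.
Proof.
  unfold diag_sentence, goal_holds; rewrite fsat_alls.
  setoid_rewrite in_seq; cbn [fsat]; setoid_rewrite fsat_fAxioms.
  apply all_iff_morphism; intros m.
  assert (Hout : (forall j, ~ 0 <= j < 0 + 11 -> m j = e j) <->
                 (forall j, 11 <= j -> m j = e j)).
  { split; intros H j Hj; apply H; lia. }
  rewrite Hout; apply imp_iff_compat_l, imp_iff_compat_l.
  rewrite fsat_ex; apply ex_iff_morphism; intros a.
  rewrite fsat_and, fsat_fNumeral, fsat_fSelfZero, upd_same.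
  now rewrite (numeral_params _ m), (self_zero_params _ m) by (apply same_params_upd; lia).
Qed.

End AxiomSemantics.

Fixpoint fv (f : fform) : list nat :=
  match f with
  | fEq i j | fRel i j => [i; j]
  | fBot => []
  | fImp a b => fv a ++ fv b
  | fAll j a => filter (fun i => negb (i =? j)) (fv a)
  end.

Lemma free_in_fv i f : free_in i f = true -> In i (fv f).
Proof.
  induction f; cbn; rewrite ?Bool.orb_true_iff, ?Bool.andb_true_iff, ?Nat.eqb_eq;
    intros H; try discriminate.
  - destruct H as [<-|<-]; cbn; auto.
  - destruct H as [<-|<-]; cbn; auto.
  - apply in_or_app; tauto.
  - apply filter_In; tauto.
Qed.

Lemma fv_fNumeral x i : In i (fv (fNumeral x)) -> i = 16 \/ i < 11.
Proof.
  induction x as [|x IH]; cbn [fNumeral]; intros H.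
  - vm_compute in H; intuition lia.
  - cbn in H; repeat (destruct H as [<-|H]; [lia|]).
    rewrite !app_nil_r, !filter_In in H.
    destruct H as [[H _] _]; now apply IH in H.
Qed.

Definition fv_within (B : list nat) (f : fform) : bool :=
  forallb (fun i => existsb (Nat.eqb i) B) (fv f).

Lemma fv_within_spec B f i : fv_within B f = true -> In i (fv f) -> In i B.
Proof.
  unfold fv_within; rewrite forallb_forall; intros H Hi.
  apply H, existsb_exists in Hi as [j [Hj Hij]].
  now apply Nat.eqb_eq in Hij as ->.
Qed.

Lemma fv_fAlls vs f i : In i (fv (fAlls vs f)) -> ~ In i vs /\ In i (fv f).
Proof.
  induction vs as [|v vs IH]; cbn; [tauto|].
  rewrite filter_In, Bool.negb_true_iff, Nat.eqb_neq.
  intros [H Hv]; apply IH in H; intuition.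
Qed.

Lemma diag_sentence_closed x : sentence (diag_sentence x).
Proof.
  intros i; destruct (free_in i (diag_sentence x)) eqn:Hfree; auto; exfalso.
  apply free_in_fv, fv_fAlls in Hfree as [Hpar Hi]; rewrite in_seq in Hpar.
  cbn [fv] in Hi; apply in_app_or in Hi as [Hi|Hi].
  - apply (fv_within_spec (seq 0 11)) in Hi; [rewrite in_seq in Hi; lia|].
    vm_compute; reflexivity.
  - cbn in Hi; rewrite !app_nil_r, filter_In, in_app_iff, Bool.negb_true_iff, Nat.eqb_neq in Hi.
    destruct Hi as [[Hi|Hi] H16].
    + apply fv_fNumeral in Hi; lia.
    + repeat (destruct Hi as [<-|Hi]; [lia|]); destruct Hi.
Qed.

(** * Models of the axioms *)

Section ModelsOfTheAxioms.
Context {W : Type} (R : W -> W -> Prop) (m : nat -> W).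
Variables (zero : W) (next : W -> W).
Hypothesis zero_spec : is_num R m zero /\ is_zero R m zero.
Hypothesis next_spec :
  forall x, is_num R m x -> is_num R m (next x) /\ rel_holds R m 1 x (next x) (next x).
Hypothesis rules_hold : forall r, In r rules -> rule_holds R m r.

Definition elem (n : nat) : W := Nat.iter n next zero.
Arguments elem : simpl never.

Lemma elem_num n : is_num R m (elem n).
Proof. induction n as [|n IH]; [apply zero_spec|apply (next_spec _ IH)]. Qed.

Lemma elem_zero : is_zero R m (elem 0).
Proof. apply zero_spec. Qed.

Lemma elem_succ n : rel_holds R m 1 (elem n) (elem (S n)) (elem (S n)).
Proof. apply (next_spec _ (elem_num n)). Qed.

Lemma rule_instance r vals : In r rules ->
  Forall (atom_holds R m (fun i => elem (nth i vals 0))) (rule_prems r) ->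
  atom_holds R m (fun i => elem (nth i vals 0)) (rule_concl r).
Proof. intros Hr; apply (rules_hold r Hr); intros; apply elem_num. Qed.

Ltac use_rule r vals :=
  apply (rule_instance r vals); [cbn; tauto|];
  cbv beta iota delta [r rule_prems aPair aSucc aNth aEv aEvs aMu];
  repeat apply Forall_cons; try apply Forall_nil;
  cbv beta iota delta [atom_holds nth].

Lemma elem_pair a b : rel_holds R m 0 (elem a) (elem b) (elem (cpair a b)).
Proof.
  remember (a + b) as s eqn:Hs; revert a b Hs.
  induction s as [|s IH]; intros a b Hs.
  - assert (a = 0) as -> by lia; assert (b = 0) as -> by lia.
    use_rule rule_pair_zero [0]; apply elem_zero.
  - revert a Hs; induction b as [|b IHb]; intros a Hs.
    + replace a with (S s) by lia; rewrite cpair_succ_0.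
      use_rule rule_pair_succ_0 [0; s; cpair 0 s; S s; S (cpair 0 s)];
        auto using elem_zero, elem_succ.
    + rewrite cpair_succ_r.
      use_rule rule_pair_succ_r [a; S a; b; S b; cpair (S a) b; S (cpair (S a) b)];
        auto using elem_succ.
      apply IHb; lia.
Qed.

Lemma elem_nth l i : rel_holds R m 2 (elem i) (elem (lcode l)) (elem (nth i l 0)).
Proof.
  revert i; induction l as [|n l IH]; intros i.
  - replace (nth i [] 0) with 0 by (destruct i; reflexivity).
    use_rule rule_nth_nil [i; 0]; apply elem_zero.
  - cbn [lcode]; destruct i as [|i]; cbn [nth].
    + use_rule rule_nth_cons_0 [0; n; lcode l; cpair n (lcode l); S (cpair n (lcode l))];
        auto using elem_zero, elem_succ, elem_pair.
    + use_rule rule_nth_cons_succ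
        [i; S i; lcode l; nth i l 0; n; cpair n (lcode l); S (cpair n (lcode l))];
        auto using elem_succ, elem_pair.
Qed.

Lemma elem_ev_zero v : rel_holds R m 3 (elem (pcode pZero)) (elem (lcode v)) (elem 0).
Proof. use_rule rule_ev_zero [cpair 0 0; lcode v; 0]; auto using elem_zero, elem_pair. Qed.

Lemma elem_ev_succ v :
  rel_holds R m 3 (elem (pcode pSucc)) (elem (lcode v)) (elem (S (hd 0 v))).
Proof.
  replace (hd 0 v) with (nth 0 v 0) by (destruct v; reflexivity).
  use_rule rule_ev_succ [cpair 1 0; lcode v; S (nth 0 v 0); 0; 1; nth 0 v 0];
    auto using elem_zero, elem_succ, elem_pair, elem_nth.
Qed.

Lemma elem_ev_proj i v :
  rel_holds R m 3 (elem (pcode (pProj i))) (elem (lcode v)) (elem (nth i v 0)).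
Proof.
  use_rule rule_ev_proj [cpair 2 i; lcode v; nth i v 0; 0; 1; 2; i];
    auto using elem_zero, elem_succ, elem_pair, elem_nth.
Qed.

Lemma elem_ev_comp f gs v ws y :
  rel_holds R m 4 (elem (pcodes gs)) (elem (lcode v)) (elem (lcode ws)) ->
  rel_holds R m 3 (elem (pcode f)) (elem (lcode ws)) (elem y) ->
  rel_holds R m 3 (elem (pcode (pComp f gs))) (elem (lcode v)) (elem y).
Proof.
  intros; rewrite pcode_comp.
  use_rule rule_ev_comp [cpair 3 (cpair (pcode f) (pcodes gs)); lcode v; y; 0; 1; 2; 3;
                         cpair (pcode f) (pcodes gs); pcode f; pcodes gs; lcode ws];
    auto using elem_zero, elem_succ, elem_pair.
Qed.

Lemma elem_ev_rec_0 f g v y :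
  rel_holds R m 3 (elem (pcode f)) (elem (lcode v)) (elem y) ->
  rel_holds R m 3 (elem (pcode (pRec f g))) (elem (lcode (0 :: v))) (elem y).
Proof.
  intros; cbn [pcode lcode].
  use_rule rule_ev_rec_0
    [cpair 4 (cpair (pcode f) (pcode g)); S (cpair 0 (lcode v)); y; 0; 1; 2; 3; 4;
     cpair (pcode f) (pcode g); pcode f; pcode g; lcode v; cpair 0 (lcode v)];
    auto using elem_zero, elem_succ, elem_pair.
Qed.

Lemma elem_ev_rec_succ f g n v y z :
  rel_holds R m 3 (elem (pcode (pRec f g))) (elem (lcode (n :: v))) (elem y) ->
  rel_holds R m 3 (elem (pcode g)) (elem (lcode (n :: y :: v))) (elem z) ->
  rel_holds R m 3 (elem (pcode (pRec f g))) (elem (lcode (S n :: v))) (elem z).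
Proof.
  intros; cbn [pcode lcode] in *.
  use_rule rule_ev_rec_succ
    [cpair 4 (cpair (pcode f) (pcode g)); S (cpair (S n) (lcode v)); z; 0; 1; 2; 3; 4;
     cpair (pcode f) (pcode g); pcode f; pcode g; n; S n; lcode v;
     cpair n (lcode v); S (cpair n (lcode v)); y; cpair y (lcode v);
     S (cpair y (lcode v)); cpair n (S (cpair y (lcode v)));
     S (cpair n (S (cpair y (lcode v)))); cpair (S n) (lcode v)];
    auto using elem_zero, elem_succ, elem_pair.
Qed.

Lemma elem_positive_below f v n :
  (forall k, k < n -> exists r, rel_holds R m 3 (elem f) (elem (lcode (k :: v))) (elem (S r))) ->
  rel_holds R m 5 (elem f) (elem (lcode v)) (elem n).
Proof.
  intros Hpos; induction n as [|n IH].
  - use_rule rule_mu_0 [f; lcode v; 0]; apply elem_zero.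
  - destruct (Hpos n) as [r Hr]; [lia|]; cbn [lcode] in Hr.
    use_rule rule_mu_succ [f; lcode v; n; S n; cpair n (lcode v); S (cpair n (lcode v)); S r; r];
      auto using elem_succ, elem_pair.
Qed.

Lemma elem_ev_mu f v n :
  rel_holds R m 3 (elem (pcode f)) (elem (lcode (n :: v))) (elem 0) ->
  (forall k, k < n ->
     exists r, rel_holds R m 3 (elem (pcode f)) (elem (lcode (k :: v))) (elem (S r))) ->
  rel_holds R m 3 (elem (pcode (pMu f))) (elem (lcode v)) (elem n).
Proof.
  intros Hz Hpos; apply elem_positive_below in Hpos; cbn [pcode lcode] in *.
  use_rule rule_ev_mu
    [cpair 5 (pcode f); lcode v; n; 0; 1; 2; 3; 4; 5; pcode f; cpair n (lcode v);
     S (cpair n (lcode v))];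
    auto using elem_zero, elem_succ, elem_pair.
Qed.

Lemma elem_evs_nil v : rel_holds R m 4 (elem (pcodes [])) (elem (lcode v)) (elem (lcode [])).
Proof. use_rule rule_evs_nil [0; lcode v]; apply elem_zero. Qed.

Lemma elem_evs_cons g gs v y ys :
  rel_holds R m 3 (elem (pcode g)) (elem (lcode v)) (elem y) ->
  rel_holds R m 4 (elem (pcodes gs)) (elem (lcode v)) (elem (lcode ys)) ->
  rel_holds R m 4 (elem (pcodes (g :: gs))) (elem (lcode v)) (elem (lcode (y :: ys))).
Proof.
  intros; cbn [pcodes lcode].
  use_rule rule_evs_cons
    [pcodes gs; lcode v; lcode ys; pcode g; y; cpair (pcode g) (pcodes gs);
     S (cpair (pcode g) (pcodes gs)); cpair y (lcode ys); S (cpair y (lcode ys))];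
    auto using elem_succ, elem_pair.
Qed.

Fixpoint elem_ev F l y (H : peval F l y) {struct H} :
  rel_holds R m 3 (elem (pcode F)) (elem (lcode l)) (elem y)
with elem_evs gs l ws (H : pevals gs l ws) {struct H} :
  rel_holds R m 4 (elem (pcodes gs)) (elem (lcode l)) (elem (lcode ws)).
Proof.
  - destruct H as [v|v|i v|f gs v ws y Hgs Hf|f g v y Hf|f g n v y z Hrec Hg|f v n Hz Hpos].
    + apply elem_ev_zero.
    + apply elem_ev_succ.
    + apply elem_ev_proj.
    + exact (elem_ev_comp _ _ _ _ _ (elem_evs _ _ _ Hgs) (elem_ev _ _ _ Hf)).
    + exact (elem_ev_rec_0 _ _ _ _ (elem_ev _ _ _ Hf)).
    + exact (elem_ev_rec_succ _ _ _ _ _ _ (elem_ev _ _ _ Hrec) (elem_ev _ _ _ Hg)).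
    + apply (elem_ev_mu _ _ _ (elem_ev _ _ _ Hz)).
      intros k Hk; destruct (Hpos k Hk) as [r Hr]; exists r; exact (elem_ev _ _ _ Hr).
  - destruct H as [v|g gs v y ys Hg Hgs].
    + apply elem_evs_nil.
    + exact (elem_evs_cons _ _ _ _ _ (elem_ev _ _ _ Hg) (elem_evs _ _ _ Hgs)).
Qed.

Lemma elem_numeral x : numeral R m x (elem x).
Proof.
  induction x as [|x IH]; cbn [numeral].
  - split; [apply elem_num|apply elem_zero].
  - exists (elem x); auto using elem_num, elem_succ.
Qed.

Lemma goal_of_self_zero P : peval P [pcode P] 0 -> goal_holds R m (pcode P).
Proof.
  intros H; exists (elem (pcode P)); split; [apply elem_numeral|].
  exists (elem 0), (elem (cpair (pcode P) 0)), (elem (S (cpair (pcode P) 0))).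
  repeat match goal with |- _ /\ _ => split end;
    auto using elem_num, elem_zero, elem_succ, elem_pair.
  exact (elem_ev _ _ _ H).
Qed.

End ModelsOfTheAxioms.

Lemma axioms_force_goal {W} (R : W -> W -> Prop) m P :
  axioms_hold R m -> peval P [pcode P] 0 -> goal_holds R m (pcode P).
Proof.
  intros [[z Hz] [Hsucc Hrules]].
  destruct (ClassicalEpsilon.choice (fun x y => is_num R m x ->
              is_num R m y /\ rel_holds R m 1 x y y)) as [next Hnext].
  { intros x; destruct (classic (is_num R m x)) as [Hx|Hx].
    - destruct (Hsucc x Hx) as [y Hy]; exists y; auto.
    - exists x; tauto. }
  exact (goal_of_self_zero R m z next Hz Hnext Hrules P).
Qed.

(** * The standard interpretation *)

Definition nth_graph (i v y : nat) : Prop := forall l, v = lcode l -> y = nth i l 0.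
Definition peval_graph (c v y : nat) : Prop :=
  forall F l, c = pcode F -> v = lcode l -> peval F l y.
Definition pevals_graph (cs v ws : nat) : Prop :=
  forall gs l, cs = pcodes gs -> v = lcode l -> exists wl, ws = lcode wl /\ pevals gs l wl.
Definition positive_below (c v n : nat) : Prop :=
  forall F l, c = pcode F -> v = lcode l -> forall k, k < n -> exists r, peval F (k :: l) (S r).

Definition std_rel (k a b c : nat) : Prop :=
  match k with
  | 0 => c = cpair a b
  | 1 => b = S a /\ c = S a
  | 2 => nth_graph a b c
  | 3 => peval_graph a b c
  | 4 => pevals_graph a b c
  | 5 => positive_below a b c
  | _ => False
  end.

Definition std_atom (s : nat -> nat) (a : atom) : Prop :=
  match a with
  | AZero i => s i = 0
  | ARel k i j l => std_rel k (s i) (s j) (s l)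
  end.

Definition std_rule (r : rule) : Prop :=
  forall s, Forall (std_atom s) (rule_prems r) -> std_atom s (rule_concl r).

Ltac intro_std_rule :=
  let s := fresh "s" in
  intros s; simpl; rewrite ?Forall_cons_iff, ?Forall_nil_iff; simpl;
  repeat match goal with |- context [s ?i] => generalize (s i) end;
  intros; repeat match goal with H : _ /\ _ |- _ => destruct H end; subst.

Lemma pair_rules_std : Forall std_rule pair_rules.
Proof.
  repeat constructor; intro_std_rule.
  - reflexivity.
  - symmetry; apply cpair_succ_r.
  - symmetry; apply cpair_succ_0.
Qed.

Lemma nth_rules_std : Forall std_rule nth_rules.
Proof.
  repeat constructor; intro_std_rule.
  - intros l ->%lcode_nil_inv; now destruct n.
  - intros l (l' & -> & _)%lcode_cons_inv; reflexivity.
  - intros l (l' & -> & E)%lcode_cons_inv; cbn; auto.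
Qed.

Lemma ev_rules_std : Forall std_rule ev_rules.
Proof.
  repeat constructor; intro_std_rule; intros F l HF Hl.
  - apply (pcode_inv 0) in HF as ->; constructor.
  - apply (pcode_inv 1) in HF as ->.
    match goal with H : nth_graph _ _ _ |- _ => rewrite (H l Hl) end.
    replace (nth 0 l 0) with (hd 0 l) by (destruct l; reflexivity); constructor.
  - apply (pcode_inv 2) in HF as ->.
    match goal with H : nth_graph _ _ _ |- _ => rewrite (H l Hl) end; constructor.
  - apply (pcode_inv 3) in HF as (f & gs & -> & Ef); apply cpair_inj in Ef as [-> ->].
    match goal with H : pevals_graph _ _ _ |- _ => destruct (H gs l eq_refl Hl) as (ws & -> & Hws) end.
    econstructor; [exact Hws|eauto].
  - apply (pcode_inv 4) in HF as (f & g & -> & Ef); apply cpair_inj in Ef as [-> ->].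
    apply lcode_cons_inv in Hl as (l' & -> & Hl'); constructor; eauto.
  - apply (pcode_inv 4) in HF as (f & g & -> & Ef); apply cpair_inj in Ef as [-> ->].
    apply lcode_cons_inv in Hl as (l' & -> & Hl').
    match goal with H : peval_graph (cpair 4 _) (S (cpair ?n _)) ?y |- _ =>
      apply (evRecS f g n l' y); [apply (H (pRec f g) (n :: l')); cbn; congruence|] end.
    match goal with H : peval_graph (pcode g) (S (cpair ?n (S (cpair ?y _)))) _ |- _ =>
      apply (H g (n :: y :: l')); cbn; congruence end.
  - apply (pcode_inv 5) in HF as (f & -> & ->); constructor.
    + match goal with H : peval_graph _ _ 0 |- _ => apply (H f _ eq_refl); cbn; congruence end.
    + match goal with H : positive_below _ _ _ |- _ => apply (H f l eq_refl Hl) end.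
Qed.

Lemma evs_rules_std : Forall std_rule evs_rules.
Proof.
  repeat constructor; intro_std_rule; intros gs l Hgs Hl.
  - apply pcodes_nil_inv in Hgs as ->; exists []; split; [reflexivity|constructor].
  - apply pcodes_cons_inv in Hgs as (g & gs' & -> & -> & ->).
    match goal with H : pevals_graph _ _ _ |- _ => destruct (H gs' l eq_refl Hl) as (ws & -> & Hws) end.
    match goal with H : peval_graph _ _ ?y |- _ =>
      exists (y :: ws); split; [reflexivity|constructor; [apply (H g l eq_refl Hl)|exact Hws]] end.
Qed.

Lemma mu_rules_std : Forall std_rule mu_rules.
Proof.
  repeat constructor; intro_std_rule; intros F l HF Hl k Hk.
  - lia.
  - match goal with H : peval_graph _ (S (cpair ?n _)) (S ?r) |- _ =>
      destruct (Nat.eq_dec k n) as [->|Hne];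
      [exists r; apply (H F (n :: l) HF); cbn; congruence|] end.
    match goal with H : positive_below _ _ _ |- _ => apply (H F l HF Hl); lia end.
Qed.

Lemma rules_std r : In r rules -> std_rule r.
Proof.
  revert r; apply Forall_forall; unfold rules; rewrite !Forall_app.
  repeat split; auto using pair_rules_std, nth_rules_std, ev_rules_std, evs_rules_std, mu_rules_std.
Qed.

(** * Graph frames and flowers *)

Section Transfer.
Context {A W : Type} (RA : A -> A -> Prop) (RW : W -> W -> Prop) (f : A -> W).
Variable val : nat -> W -> Prop.

Fixpoint boxes_reflected (p : mform) : Prop :=
  match p with
  | mVar _ | mBot => True
  | mNeg a => boxes_reflected a
  | mOr a b => boxes_reflected a /\ boxes_reflected b
  | mBox a => boxes_reflected a /\
      forall x, ~ msat RW val (f x) (mBox a) -> exists y, RA x y /\ ~ msat RW val (f y) a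
  end.

Lemma msat_transfer : (forall x y, RA x y -> RW (f x) (f y)) ->
  forall p, boxes_reflected p ->
  forall x, msat RA (fun q z => val q (f z)) x p <-> msat RW val (f x) p.
Proof.
  intros Hf p; induction p as [|  |a IH|a IHa b IHb|a IH]; cbn; intros Hp x.
  - reflexivity.
  - reflexivity.
  - now rewrite IH.
  - destruct Hp; now rewrite IHa, IHb.
  - destruct Hp as [Ha Hbox]; split.
    + intros H; apply NNPP; intros Hx; destruct (Hbox x Hx) as [y [Hxy Hy]].
      apply Hy, IH; auto.
    + intros H y Hxy; apply IH; auto.
Qed.

End Transfer.

Section GraphFrame.
Context {V : Type} (adj : V -> V -> Prop).
Hypothesis adj_irrefl : forall u, ~ adj u u.

Definition gedge : Type := {p : V * V | adj (fst p) (snd p)}.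

Definition graph_R (x y : V + gedge) : Prop :=
  match x, y with
  | inl _, inl _ => True
  | inr e, inl v => v = fst (proj1_sig e) \/ v = snd (proj1_sig e)
  | _, _ => False
  end.

Lemma adjacent_graph x y : adjacent graph_R x y <->
  exists u v, x = inl u /\ y = inl v /\ (adj u v \/ adj v u).
Proof.
  split.
  - intros [Hne [[r|[[a b] Hab]] (Hr & Hx & Hy)]]; cbn in *; [tauto|].
    destruct x as [x|]; [|contradiction]; destruct y as [y|]; [|contradiction].
    exists x, y; split; auto; split; auto.
    destruct Hx as [->| ->], Hy as [->| ->]; auto; congruence.
  - intros (u & v & -> & -> & [H|H]); split;
      try (intros E; injection E as ->; exact (adj_irrefl _ H)).
    + exists (inr (exist _ (u, v) H)); cbn; auto.
    + exists (inr (exist _ (v, u) H)); cbn; auto.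
Qed.

Lemma adjacent_graph_inl u v : adjacent graph_R (inl u) (inl v) <-> adj u v \/ adj v u.
Proof.
  rewrite adjacent_graph; split.
  - intros (u' & v' & E1 & E2 & H); injection E1 as ->; injection E2 as ->; exact H.
  - intros H; eauto.
Qed.

Section FlowerEmbedding.
Variables (e0 : gedge) (val : nat -> V + gedge -> Prop).

Let v0 : V := fst (proj1_sig e0).

Fixpoint refuters (p : mform) : list V :=
  match p with
  | mVar _ | mBot => []
  | mNeg a => refuters a
  | mOr a b => refuters a ++ refuters b
  | mBox a => epsilon (inhabits v0) (fun u => ~ msat graph_R val (inl u) a) :: refuters a
  end.

Variables (r : gedge) (ext : list V).
Let K : list V := fst (proj1_sig r) :: snd (proj1_sig r) :: ext.
Let n : nat := length ext.

Definition flower_embed (x : flower_W 2 (Z.of_nat n)) : V + gedge :=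
  match proj1_sig x with 0 => inr r | S i => inl (nth i K v0) end.

Lemma flower_point i : i <= 2 + n -> exists x : flower_W 2 (Z.of_nat n), proj1_sig x = i.
Proof.
  intros Hi; unshelve eexists (exist _ i _); [|reflexivity].
  rewrite Nat2Z.id; split; [lia|exact Hi].
Qed.

Lemma flower_point_bound (x : flower_W 2 (Z.of_nat n)) : proj1_sig x <= 2 + n.
Proof. destruct x as [i Hi]; cbn; destruct Hi as [_ Hi]; now rewrite Nat2Z.id in Hi. Qed.

Lemma flower_embed_hom x y :
  flower_R 2 (Z.of_nat n) x y -> graph_R (flower_embed x) (flower_embed y).
Proof.
  destruct x as [x Hx], y as [y Hy]; unfold flower_R, flower_embed; cbn; rewrite Nat2Z.id.
  intros [[-> Hy2]|[Hx2 Hy2]].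
  - destruct y as [|[|[|y]]]; try lia; cbn; auto.
  - destruct x as [|x]; [lia|]; destruct y as [|y]; [lia|]; cbn; auto.
Qed.

Lemma flower_embed_reflects p :
  incl (refuters p) K -> boxes_reflected (flower_R 2 (Z.of_nat n)) graph_R flower_embed val p.
Proof.
  induction p as [| |a IH|a IHa b IHb|a IH]; cbn; intros Hincl; auto.
  - split; [apply IHa|apply IHb]; intros u Hu; apply Hincl, in_or_app; auto.
  - split; [apply IH; intros u Hu; apply Hincl; right; auto|].
    intros x Hx.
    assert (Hex : exists w, graph_R (flower_embed x) w /\ ~ msat graph_R val w a).
    { apply NNPP; intros H; apply Hx; intros w Hw; apply NNPP; eauto. }
    destruct Hex as [w [Hxw Hw]].
    pose proof (flower_point_bound x) as Hxb.
    unfold flower_embed in Hxw; destruct (proj1_sig x) as [|i] eqn:Ex.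
    + destruct w as [w|]; [|contradiction].
      assert (Hj : exists j, j < 2 /\ nth j K v0 = w) by (destruct Hxw as [->| ->]; eauto).
      destruct Hj as [j [Hj <-]]; destruct (flower_point (S j)) as [y Ey]; [lia|].
      exists y; split; [unfold flower_R; rewrite Ex, Ey; lia|].
      unfold flower_embed; now rewrite Ey.
    + destruct w as [w|]; [|contradiction].
      set (u := epsilon _ _) in Hincl.
      assert (Hu : ~ msat graph_R val (inl u) a) by (apply epsilon_spec; eauto).
      destruct (In_nth K u v0 (Hincl u (or_introl eq_refl))) as [j [Hj Hju]].
      change (length K) with (2 + n) in Hj.
      destruct (flower_point (S j)) as [y Ey]; [lia|].
      exists y; split; [unfold flower_R; rewrite Ex, Ey, Nat2Z.id; lia|].
      unfold flower_embed; now rewrite Ey, Hju.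
Qed.

End FlowerEmbedding.

Lemma graph_frame_validates (L : mform -> Prop) (e0 : gedge) :
  (forall n, validates (flower_R 2 (Z.of_nat n)) L) -> validates graph_R L.
Proof.
  intros Hflowers p Hp val w.
  set (r := match w with inr e => e | inl _ => e0 end).
  set (ext := (match w with inl u => [u] | inr _ => [] end) ++ refuters e0 val p).
  assert (Hw : exists x, flower_embed e0 r ext x = w).
  { destruct w as [u|e].
    - destruct (flower_point ext 3) as [x Ex]; [cbn; lia|].
      exists x; unfold flower_embed; now rewrite Ex.
    - destruct (flower_point ext 0) as [x Ex]; [lia|].
      exists x; unfold flower_embed; now rewrite Ex. }
  destruct Hw as [x Hx]; rewrite <- Hx.
  apply (msat_transfer _ _ _ _ (flower_embed_hom e0 r ext)).
  - apply flower_embed_reflects; intros u Hu; right; right; apply in_or_app; auto.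
  - apply Hflowers, Hp.
Qed.

End GraphFrame.

(* [VGadget k a b c] stands for the triple (a, b, c) of relation k; its ports
   link it to the number vertices a, b and c. *)
Inductive vertex : Type :=
| VNum (n : nat) | VNumMark | VZeroMark | VPortMark (i : nat) | VRelMark (k : nat)
| VGadget (k a b c : nat) | VPort (k a b c i : nat).

Definition std_adj (u v : vertex) : Prop :=
  match u, v with
  | VNum _, VNumMark => True
  | VNum n, VZeroMark => n = 0
  | VGadget k a b c, VRelMark k' => k = k' /\ std_rel k a b c
  | VGadget k a b c, VPort k' a' b' c' i => k = k' /\ a = a' /\ b = b' /\ c = c' /\ 1 <= i <= 3
  | VPort _ _ _ _ i, VPortMark i' => i = i' /\ 1 <= i <= 3
  | VPort _ a b c i, VNum n => (i = 1 /\ n = a) \/ (i = 2 /\ n = b) \/ (i = 3 /\ n = c)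
  | _, _ => False
  end.

Lemma std_adj_irrefl u : ~ std_adj u u.
Proof. destruct u; cbn; tauto || lia. Qed.

Definition sym_adj (u v : vertex) : Prop := std_adj u v \/ std_adj v u.

Lemma sym_adj_rel_mark u k :
  sym_adj u (VRelMark k) <-> exists a b c, u = VGadget k a b c /\ std_rel k a b c.
Proof.
  unfold sym_adj; split.
  - destruct u; cbn; intros [H|[]]; try contradiction; destruct H as [-> H]; eauto.
  - intros (a & b & c & -> & H); left; cbn; auto.
Qed.

Lemma sym_adj_port_mark u i :
  sym_adj u (VPortMark i) <-> exists k a b c, u = VPort k a b c i /\ 1 <= i <= 3.
Proof.
  unfold sym_adj; split.
  - destruct u; cbn; intros [H|[]]; try contradiction; destruct H as [-> H]; eauto 6.
  - intros (k & a & b & c & -> & H); left; cbn; auto.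
Qed.

Lemma sym_adj_gadget_port k a b c k' a' b' c' i :
  sym_adj (VGadget k a b c) (VPort k' a' b' c' i) <->
  k = k' /\ a = a' /\ b = b' /\ c = c' /\ 1 <= i <= 3.
Proof. unfold sym_adj; cbn; tauto. Qed.

Lemma sym_adj_port_num k a b c i n : sym_adj (VPort k a b c i) (VNum n) <->
  (i = 1 /\ n = a) \/ (i = 2 /\ n = b) \/ (i = 3 /\ n = c).
Proof. unfold sym_adj; cbn; tauto. Qed.

Notation std_R := (@graph_R vertex std_adj).

Definition std_env (j : nat) : vertex + gedge std_adj :=
  inl match j with
      | 0 => VNumMark
      | 1 => VZeroMark
      | 2 => VPortMark 1
      | 3 => VPortMark 2
      | 4 => VPortMark 3
      | S (S (S (S (S k)))) => VRelMark k
      end.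

Lemma adjacent_std u v : adjacent std_R (inl u) (inl v) <-> sym_adj u v.
Proof. exact (adjacent_graph_inl std_adj std_adj_irrefl u v). Qed.

Lemma adjacent_std_inl x v : adjacent std_R x (inl v) -> exists u, x = inl u.
Proof.
  rewrite (adjacent_graph std_adj std_adj_irrefl); intros (u & _ & -> & _); eauto.
Qed.

Lemma is_num_std x : is_num std_R std_env x <-> exists n, x = inl (VNum n).
Proof.
  split.
  - intros H; destruct (adjacent_std_inl _ _ H) as [u ->].
    apply adjacent_std in H; destruct u; destruct H as [H|H]; cbn in H; try contradiction; eauto.
  - intros [n ->]; apply adjacent_std; left; exact I.
Qed.

Lemma is_zero_std x : is_zero std_R std_env x <-> x = inl (VNum 0).
Proof.
  split.
  - intros H; destruct (adjacent_std_inl _ _ H) as [u ->].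
    apply adjacent_std in H; destruct u; destruct H as [H|H]; cbn in H; try contradiction.
    now subst.
  - intros ->; apply adjacent_std; left; reflexivity.
Qed.

Lemma rel_holds_std k a b c :
  rel_holds std_R std_env k (inl (VNum a)) (inl (VNum b)) (inl (VNum c)) <-> std_rel k a b c.
Proof.
  unfold rel_holds, std_env; simpl; split.
  - intros (g & p1 & p2 & p3 & Hg & Hg1 & H1m & H1a & Hg2 & H2m & H2b & Hg3 & H3m & H3c).
    destruct (adjacent_std_inl _ _ Hg) as [g' ->].
    destruct (adjacent_std_inl _ _ H1m) as [q1 ->].
    destruct (adjacent_std_inl _ _ H2m) as [q2 ->].
    destruct (adjacent_std_inl _ _ H3m) as [q3 ->].
    rewrite !adjacent_std in *.
    apply sym_adj_rel_mark in Hg as (a' & b' & c' & -> & Hrel).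
    apply sym_adj_port_mark in H1m as (k1 & a1 & b1 & c1 & -> & _).
    apply sym_adj_port_mark in H2m as (k2 & a2 & b2 & c2 & -> & _).
    apply sym_adj_port_mark in H3m as (k3 & a3 & b3 & c3 & -> & _).
    apply sym_adj_gadget_port in Hg1 as (<- & <- & <- & <- & _).
    apply sym_adj_gadget_port in Hg2 as (<- & <- & <- & <- & _).
    apply sym_adj_gadget_port in Hg3 as (<- & <- & <- & <- & _).
    rewrite sym_adj_port_num in H1a, H2b, H3c.
    replace a with a' by lia; replace b with b' by lia; replace c with c' by lia.
    exact Hrel.
  - intros Hrel.
    exists (inl (VGadget k a b c)), (inl (VPort k a b c 1)), (inl (VPort k a b c 2)),
      (inl (VPort k a b c 3)).
    rewrite !adjacent_std; unfold sym_adj; cbn; intuition lia.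
Qed.

Definition num_value (x : vertex + gedge std_adj) : nat :=
  match x with inl (VNum n) => n | _ => 0 end.

Lemma atom_holds_std n a rho : atom_wf n a = true ->
  (forall i, i < n -> is_num std_R std_env (rho i)) ->
  atom_holds std_R std_env rho a <-> std_atom (fun i => num_value (rho i)) a.
Proof.
  intros Hwf Hnum.
  assert (Hval : forall i, i < n -> exists k, rho i = inl (VNum k)).
  { intros i Hi; apply is_num_std, Hnum, Hi. }
  destruct a as [i|k i j l]; cbn [atom_wf atom_holds std_atom] in *.
  - apply Nat.ltb_lt, Hval in Hwf as [x ->]; rewrite is_zero_std; cbn.
    split; [now intros [= ->]|now intros ->].
  - rewrite !Bool.andb_true_iff, !Nat.ltb_lt in Hwf.
    destruct (Hval i ltac:(tauto)) as [x ->], (Hval j ltac:(tauto)) as [y ->],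
      (Hval l ltac:(tauto)) as [z ->].
    apply rel_holds_std.
Qed.

Lemma rule_holds_std r : rule_wf r = true -> std_rule r -> rule_holds std_R std_env r.
Proof.
  intros Hwf Hstd rho Hnum Hprems; unfold rule_wf in Hwf; rewrite forallb_forall in Hwf.
  rewrite (atom_holds_std (rule_arity r)) by (auto; apply Hwf; left; auto).
  apply Hstd; rewrite Forall_forall in *; intros a Ha.
  rewrite <- (atom_holds_std (rule_arity r)) by (auto; apply Hwf; right; auto); auto.
Qed.

Lemma std_axioms : axioms_hold std_R std_env.
Proof.
  split; [|split].
  - exists (inl (VNum 0)); rewrite is_num_std, is_zero_std; eauto.
  - intros x Hx; apply is_num_std in Hx as [n ->]; exists (inl (VNum (S n))).
    rewrite is_num_std, rel_holds_std; cbn; eauto.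
  - intros r Hr; apply rule_holds_std; auto using rules_wf, rules_std.
Qed.

Lemma numeral_std x a : numeral std_R std_env x a -> is_num std_R std_env a -> a = inl (VNum x).
Proof.
  revert a; induction x as [|x IH]; intros a Ha Hnum; cbn [numeral] in Ha.
  - apply is_zero_std, Ha.
  - destruct Ha as [b [[Hb Hsucc] Hx]]; rewrite (IH b Hx Hb) in Hsucc.
    apply is_num_std in Hnum as [k ->]; rewrite rel_holds_std in Hsucc.
    destruct Hsucc as [-> _]; reflexivity.
Qed.

Lemma self_zero_of_std_goal P : goal_holds std_R std_env (pcode P) -> peval P [pcode P] 0.
Proof.
  intros [a [Ha (z & p & v & Hnum & Hz & Hz' & Hp & Hpair & Hv & Hsucc & Hev)]].
  rewrite (numeral_std _ _ Ha Hnum) in Hpair, Hev.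
  apply is_zero_std in Hz' as ->; apply is_num_std in Hp as [np ->].
  apply is_num_std in Hv as [nv ->].
  rewrite rel_holds_std in Hpair, Hsucc, Hev; cbn in Hpair, Hsucc, Hev.
  destruct Hsucc as [-> _]; subst np.
  now apply (Hev P [pcode P]).
Qed.

(** * Diagonalization *)

Lemma Th_Fr_diag_sentence L P :
  (forall n, validates (flower_R 2 (Z.of_nat n)) L) ->
  Th_Fr L (diag_sentence (pcode P)) <-> peval P [pcode P] 0.
Proof.
  intros Hflowers; split.
  - intros [_ Hvalid].
    pose (e0 := exist (fun p => std_adj (fst p) (snd p)) (VNum 0, VNumMark) I : gedge std_adj).
    specialize (Hvalid _ std_R (inhabits (inl (VNum 0)))
                  (graph_frame_validates std_adj L e0 Hflowers) std_env).
    rewrite fsat_diag_sentence in Hvalid.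
    apply self_zero_of_std_goal, Hvalid; auto using std_axioms.
  - intros H; split; [apply diag_sentence_closed|].
    intros W R _ _ e; rewrite fsat_diag_sentence.
    intros m _ Hax; exact (axioms_force_goal R m P Hax H).
Qed.

Definition numeral_succ_ctx : fctx :=
  CImpL (CAll 17 (CImpL (CImpL (CImpR (fAnd (fNum 17) (fSucc 17 16))
    (CImpL (CAll 16 (CImpR (fEq 16 17) CHole)) fBot)) fBot) fBot)) fBot.

Definition diag_ctx : fctx :=
  fold_right CAll
    (CImpR fAxioms (CImpL (CAll 16 (CImpL (CImpL (CImpL CHole (fNot fSelfZero)) fBot) fBot)) fBot))
    (seq 0 11).

Lemma fill_numeral_succ_ctx x : fill numeral_succ_ctx (fNumeral x) = fNumeral (S x).
Proof. reflexivity. Qed.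

Lemma fill_diag_ctx x : fill diag_ctx (fNumeral x) = diag_sentence x.
Proof. reflexivity. Qed.

Definition diag_prog : prf :=
  pComp (fill_prog diag_ctx)
    [pRec (fcode_prog (fNumeral 0)) (pComp (fill_prog numeral_succ_ctx) [pProj 1])].

Lemma diag_prog_spec x : peval diag_prog [x] (fcode (diag_sentence x)).
Proof.
  assert (Hnum : forall x, peval (pRec (fcode_prog (fNumeral 0))
                   (pComp (fill_prog numeral_succ_ctx) [pProj 1])) [x] (fcode (fNumeral x))).
  { induction x0 as [|x0 IH].
    - apply evRec0, fcode_prog_spec.
    - eapply evRecS; [exact IH|].
      econstructor; [econstructor; [apply (evProj 1 [x0; fcode (fNumeral x0)])|constructor]|].
      rewrite <- fill_numeral_succ_ctx; apply (fill_prog_spec numeral_succ_ctx (fNumeral x0) []). }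
  econstructor; [econstructor; [apply Hnum|constructor]|].
  rewrite <- fill_diag_ctx; apply (fill_prog_spec diag_ctx (fNumeral x) []).
Qed.

Theorem lemma49 (L : mform -> Prop) :
  euclidean_modal_logic L ->
  (forall n : Z, (-1 <= n)%Z -> S_L L 2 n) ->
  ~ decidable_sentences (Th_Fr L).
Proof.
  intros _ HS [d Hd].
  assert (Hflowers : forall n, validates (flower_R 2 (Z.of_nat n)) L).
  { intros n; apply (HS (Z.of_nat n)); lia. }
  set (D := pComp d [diag_prog]).
  assert (HD : forall y, peval d [fcode (diag_sentence (pcode D))] y -> peval D [pcode D] y).
  { intros y Hy; econstructor; [econstructor; [apply diag_prog_spec|constructor]|exact Hy]. }
  destruct (Hd _ (diag_sentence_closed (pcode D))) as [Hyes Hno].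
  destruct (classic (Th_Fr L (diag_sentence (pcode D)))) as [Hth|Hth].
  - pose proof (HD 1 (Hyes Hth)) as D1.
    apply (Th_Fr_diag_sentence L D Hflowers) in Hth as D0.
    discriminate (peval_functional _ _ _ D1 _ D0).
  - apply Hth, (Th_Fr_diag_sentence L D Hflowers), HD, Hno, Hth.
Qed.
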